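(* For every $K>1$ and every $p>q\ge 1$, the space $\ell_p$ admits a $K$-localized weakly bi-Lipschitz embedding into $\ell_q$ with distortion $O_{p/q}(K^{p/q-1})$, where the implied constant depends only on $p/q$.
   Context: Given $K,D>1$, a metric space $(\mathcal{M},d_\mathcal{M})$ admits a $K$-localized weakly bi-Lipschitz embedding into a metric space $(\mathcal{N},d_\mathcal{N})$ with distortion $D$ if for every $\Delta>0$ and every subset $\mathcal{C}\subseteq\mathcal{M}$ with $\operatorname{diam}_\mathcal{M}(\mathcal{C})\le K\Delta$ there is a non-constant Lipschitz function $f:\mathcal{C}\to\mathcal{N}$ such that for all $x,y\in\mathcal{C}$ with $d_\mathcal{M}(x,y)>\Delta$, $d_\mathcal{N}(f(x),f(y))>\frac{\|f\|_{\mathrm{Lip}}}{D}\Delta$, where $\|f\|_{\mathrm{Lip}}$ is the Lipschitz constant of $f$. $\ell_p,\ell_q$ are the sequence spaces with the $\ell_p$, $\ell_q$ norms. *)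

From HB Require Import structures.
From mathcomp Require Import all_boot all_order all_algebra.
From mathcomp Require Import all_classical all_reals all_analysis.
Set Implicit Arguments. Unset Strict Implicit. Unset Printing Implicit Defensive.
Import Order.TTheory GRing.Theory Num.Theory.
Import numFieldNormedType.Exports.
Local Open Scope classical_set_scope.
Local Open Scope ring_scope.

Definition lp_summable (R : realType) (p : R) (x : nat -> R) : Prop :=
  cvgn (series (fun n => `|x n| `^ p)).

Definition lp (R : realType) (p : R) : Type := {x : nat -> R | lp_summable p x}.

Definition lp_norm (R : realType) (p : R) (x : nat -> R) : R :=
  (limn (series (fun n => `|x n| `^ p))) `^ p^-1.

Definition lp_dist (R : realType) (p : R) (x y : lp p) : R :=
  lp_norm p (fun n => proj1_sig x n - proj1_sig y n).

Definition lipschitz_on (R : realType) (M N : Type) (dM : M -> M -> R)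
  (dN : N -> N -> R) (C : set M) (f : M -> N) : Prop :=
  exists L : R, forall x y, C x -> C y -> dN (f x) (f y) <= L * dM x y.

Definition lip_norm (R : realType) (M N : Type) (dM : M -> M -> R)
  (dN : N -> N -> R) (C : set M) (f : M -> N) : R :=
  sup [set r : R | exists x y, [/\ C x, C y, x <> y & r = dN (f x) (f y) / dM x y]].

Definition diam_le (R : realType) (M : Type) (dM : M -> M -> R) (C : set M) (r : R)
  : Prop := forall x y, C x -> C y -> dM x y <= r.

Definition nonconstant_on (M N : Type) (C : set M) (f : M -> N) : Prop :=
  exists x y, C x /\ C y /\ f x <> f y.

Definition localized_weakly_biLipschitz (R : realType) (M N : Type)
  (dM : M -> M -> R) (dN : N -> N -> R) (K D : R) : Prop :=
  forall (Delta : R) (C : set M), 0 < Delta ->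
    (exists a b, C a /\ C b /\ a <> b) ->
    diam_le dM C (K * Delta) ->
    exists f : M -> N,
      lipschitz_on dM dN C f /\ nonconstant_on C f /\
      forall x y, C x -> C y -> dM x y > Delta ->
        dN (f x) (f y) > lip_norm dM dN C f / D * Delta.

(* Fix a point a of C and send x to the sequence sign(x_n - a_n) |x_n - a_n|^r,
   r = p/q: a translated Mazur map, which lands in l_q because |t|^r raised to
   the power q is |t|^p.  Coordinatewise, with phi(t) = sign(t) |t|^r,
     |s - t|^r <= 2^r |phi s - phi t|   and
     |phi s - phi t| <= r |s - t| (|s| + |t|)^(r-1).
   Summing the first bound gives ||x - y||_p^r <= 2^r ||F x - F y||_q, so points
   more than Delta apart are sent more than Delta^r / 2^r apart.  For the second,
   Young's inequality with a free scale e, summed and then optimised in e (this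
   replaces Hoelder's inequality), gives ||F x - F y||_q <= 2 r (4 K Delta)^(r-1)
   ||x - y||_p on C, whose points lie within K Delta of a.  At scale Delta the
   ratio of the two bounds is a constant multiple of K^(r-1). *)

From HB Require Import structures.
From mathcomp Require Import all_boot all_order all_algebra.
From mathcomp Require Import all_classical all_reals all_analysis.
From mathcomp Require Import ring lra.
Import Order.TTheory GRing.Theory Num.Theory.
Import numFieldNormedType.Exports.

Set Implicit Arguments.
Unset Strict Implicit.
Unset Printing Implicit Defensive.
Local Open Scope ring_scope.

Section PowRInequalities.
Variable R : realType.
Implicit Types a b c d r s S T : R.

Lemma powR_ge1 a s : 1 <= a -> 0 <= s -> 1 <= a `^ s.
Proof. by move=> a1 s0; rewrite -(powRr0 a) ler_powR. Qed.

Lemma powRK s a : s != 0 -> 0 <= a -> (a `^ s) `^ s^-1 = a.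
Proof. by move=> s0 a0; rewrite -powRrM mulfV ?powRr1. Qed.

Lemma powRVK s a : s != 0 -> 0 <= a -> (a `^ s^-1) `^ s = a.
Proof. by move=> s0 a0; rewrite -powRrM mulVf ?powRr1. Qed.

Lemma powR_superadditive r a b : 1 <= r -> 0 <= a -> 0 <= b ->
  a `^ r + b `^ r <= (a + b) `^ r.
Proof.
move=> r1 a0 b0; have r0 : 0 < r by apply: lt_le_trans r1.
have ab0 : 0 <= a + b by rewrite addr_ge0.
have r10 : 0 <= r - 1 by rewrite subr_ge0.
rewrite -(mulr_powRB1 a0 r0) -(mulr_powRB1 b0 r0) -(mulr_powRB1 ab0 r0) mulrDl.
by rewrite lerD // ler_wpM2l // ge0_ler_powR // ?nnegrE // ?lerDl ?lerDr.
Qed.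

Lemma powR_add_le s a b : 0 <= s -> 0 <= a -> 0 <= b ->
  (a + b) `^ s <= 2 `^ s * (a `^ s + b `^ s).
Proof.
move=> s0 a0 b0; wlog ba : a b a0 b0 / b <= a.
  move=> H; case: (leP b a) => [|/ltW] ?; first exact: H.
  by rewrite addrC [a `^ s + _]addrC; exact: H.
have ab2a : a + b <= 2 * a by rewrite mulr_natl mulr2n lerD2l.
apply: (le_trans (ge0_ler_powR s0 _ _ ab2a)); rewrite ?nnegrE ?addr_ge0 ?mulr_ge0 //.
by rewrite powRM // ler_wpM2l ?powR_ge0 // lerDl powR_ge0.
Qed.

Lemma mul_powR_le_add r a c : 1 < r -> 0 <= a -> 0 <= c ->
  a * c `^ (r - 1) <= a `^ r + c `^ r.
Proof.
move=> r1 a0 c0; have r0 : 0 < r by apply: lt_trans r1.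
have r10 : 0 <= r - 1 by rewrite subr_ge0 ltW.
case: (leP a c) => ac.
  apply: (@le_trans _ _ (c `^ r)); last by rewrite lerDr powR_ge0.
  by rewrite -(mulr_powRB1 c0 r0) ler_wpM2r ?powR_ge0.
apply: (@le_trans _ _ (a `^ r)); last by rewrite lerDl powR_ge0.
by rewrite -(mulr_powRB1 a0 r0) ler_wpM2l // ge0_ler_powR ?nnegrE // ltW.
Qed.

Lemma powR_sub_le r a b : 1 < r -> 0 <= b -> b <= a ->
  a `^ r - b `^ r <= r * (a - b) * (a + b) `^ (r - 1).
Proof.
move=> r1 b0 ba; have a0 : 0 <= a by apply: le_trans ba.
have r0 : 0 < r by apply: lt_trans r1.
have r10 : 0 < r - 1 by rewrite subr_gt0.
have r'0 : 0 < r / (r - 1) by rewrite divr_gt0.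
have conj_r : r^-1 + (r / (r - 1))^-1 = 1.
  by rewrite invf_div; field; rewrite gt_eqF.
(* Young's inequality with the conjugate exponents [r] and [r / (r - 1)] gives
   the tangent-line bound [r b a^(r-1) <= b^r + (r-1) a^r]. *)
have young := conjugate_powR b0 (powR_ge0 a (r - 1)) r0 r'0 conj_r.
rewrite -powRrM mulrCA mulfV ?gt_eqF // mulr1 in young.
have tangent : r * (b * a `^ (r - 1)) <= b `^ r + (r - 1) * a `^ r.
  have -> : b `^ r + (r - 1) * a `^ r = (b `^ r / r + a `^ r / (r / (r - 1))) * r.
    by field; rewrite !gt_eqF.
  by rewrite mulrC ler_pM2r.
apply: (@le_trans _ _ (r * (a - b) * a `^ (r - 1))).
  by rewrite -(mulr_powRB1 a0 r0) in tangent *; nra.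
rewrite ler_wpM2l ?mulr_ge0 ?subr_ge0 ?(ltW r0) //.
by rewrite ge0_ler_powR ?nnegrE ?(ltW r10) ?addr_ge0 ?lerDl.
Qed.

(* Take [e = d / T]; when [d = 0], let [e] tend to [0] instead. *)
Lemma le_of_forall_scaled_young r S d T c : 1 < r -> 0 <= d -> 0 < T -> 0 <= c ->
  (forall e, 0 < e -> e `^ (r - 1) * S <= c * (d `^ r + (e * T) `^ r)) ->
  S <= 2 * c * d * T `^ (r - 1).
Proof.
move=> r1 d0 T0 c0 scaled; have r0 : 0 < r by apply: lt_trans r1.
have T1 : 0 < T `^ (r - 1) by rewrite powR_gt0.
have [d_eq0 | d_gt0] := eqVneq d 0.
  rewrite d_eq0 mulr0 mul0r; apply/ler_addgt0Pr => e e0; rewrite add0r.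
  set k := c * T `^ r + 1; have k0 : 0 < k by rewrite ltr_pwDr ?mulr_ge0 ?powR_ge0.
  have ek0 : 0 < e / k by rewrite divr_gt0.
  have := scaled _ ek0; rewrite d_eq0 powR0 ?gt_eqF // add0r.
  rewrite [(_ * T) `^ r]powRM ?(ltW ek0) ?(ltW T0) //.
  rewrite -[(e / k) `^ r](mulr_powRB1 (ltW ek0) r0).
  rewrite [X in _ <= X](_ : _ = (e / k) `^ (r - 1) * (c * T `^ r * (e / k))); last by ring.
  rewrite ler_pM2l ?powR_gt0 // => /le_trans; apply.
  by rewrite mulrA ler_pdivrMr // mulrC ler_pM2l // /k lerDl.
have dT0 : 0 < d / T by rewrite divr_gt0 // lt0r d_gt0.
have := scaled _ dT0; rewrite divfK ?gt_eqF // => h.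
have scaleT : (d / T) `^ (r - 1) * T `^ (r - 1) = d `^ (r - 1).
  by rewrite -powRM ?divfK ?gt_eqF // ltW.
rewrite -(ler_pM2l (_ : 0 < d `^ (r - 1))) ?powR_gt0 ?lt0r ?d_gt0 //.
have -> : d `^ (r - 1) * (2 * c * d * T `^ (r - 1)) = T `^ (r - 1) * (c * (d `^ r + d `^ r)).
  by rewrite -(mulr_powRB1 d0 r0); ring.
by rewrite -scaleT mulrAC mulrC ler_pM2l.
Qed.

End PowRInequalities.

Section SignedPower.
Variable R : realType.
Implicit Types a b r t u v : R.

Definition signed_powR r t : R := if 0 <= t then t `^ r else - ((- t) `^ r).

Lemma normr_signed_powR r t : `|signed_powR r t| = `|t| `^ r.
Proof.
rewrite /signed_powR; case: ifP => t0; first by rewrite !ger0_norm ?powR_ge0.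
by rewrite normrN ger0_norm ?powR_ge0 // ltr0_norm // ltNge t0.
Qed.

Lemma signed_powR_bounds_same_sign r a b : 1 < r -> 0 <= b -> b <= a ->
  (a - b) `^ r <= 2 `^ r * (a `^ r - b `^ r) /\
  a `^ r - b `^ r <= r * (a - b) * (a + b) `^ (r - 1).
Proof.
move=> r1 b0 ba; split; last exact: powR_sub_le.
have r0 : 0 <= r by rewrite ltW // (lt_trans ltr01).
have := powR_superadditive (ltW r1) (_ : 0 <= a - b) b0; rewrite subrK subr_ge0 => /(_ ba).
rewrite -lerBrDr => /le_trans; apply.
rewrite ler_peMl ?powR_ge1 ?ler1n // subr_ge0 ge0_ler_powR ?nnegrE //.
exact: le_trans ba.
Qed.

Lemma signed_powR_bounds_opposite_sign r a b : 1 < r -> 0 <= a -> 0 <= b ->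
  (a + b) `^ r <= 2 `^ r * (a `^ r + b `^ r) /\
  a `^ r + b `^ r <= r * (a + b) * (a + b) `^ (r - 1).
Proof.
move=> r1 a0 b0; have r0 : 0 < r by apply: lt_trans r1.
split; first exact: powR_add_le (ltW r0) a0 b0.
apply: (le_trans (powR_superadditive (ltW r1) a0 b0)).
by rewrite -mulrA mulr_powRB1 ?addr_ge0 // ler_peMl ?powR_ge0 // ltW.
Qed.

Lemma signed_powR_dist_bounds r u v : 1 < r ->
  `|u - v| `^ r <= 2 `^ r * `|signed_powR r u - signed_powR r v| /\
  `|signed_powR r u - signed_powR r v| <= r * `|u - v| * (`|u| + `|v|) `^ (r - 1).
Proof.
move=> r1; wlog vu : u v / v <= u.
  move=> H; case: (leP v u) => [|/ltW] vu; first exact: H.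
  by rewrite distrC [`|signed_powR r u - _|]distrC [`|u| + _]addrC; exact: H.
have r0 : 0 <= r by rewrite ltW // (lt_trans ltr01).
rewrite [`|u - v|]ger0_norm ?subr_ge0 // /signed_powR.
have [v0|v_lt0] := leP 0 v.
  have u0 : 0 <= u by apply: le_trans vu.
  rewrite u0 ger0_norm ?subr_ge0 ?ge0_ler_powR ?nnegrE // !ger0_norm //.
  exact: signed_powR_bounds_same_sign.
have [u0|u_lt0] := leP 0 u.
  rewrite opprK ger0_norm ?addr_ge0 ?powR_ge0 //.
  rewrite (ger0_norm u0) (ltr0_norm v_lt0).
  by apply: signed_powR_bounds_opposite_sign => //; rewrite oppr_ge0 ltW.
rewrite opprK (addrC (- _)) ger0_norm; last first.
  by rewrite subr_ge0 ge0_ler_powR ?nnegrE ?lerN2 // oppr_ge0 ltW.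
rewrite !ltr0_norm // (addrC (- u)) (_ : u - v = - v - - u); last by rewrite opprK addrC.
by apply: signed_powR_bounds_same_sign; rewrite ?lerN2 // oppr_ge0 ltW.
Qed.

Lemma signed_powR_inj r : 1 < r -> injective (signed_powR r).
Proof.
move=> r1 u v guv; have [lower _] := signed_powR_dist_bounds u v r1.
rewrite guv subrr normr0 mulr0 in lower.
have /powR_eq0_eq0/normr0_eq0/eqP : `|u - v| `^ r = 0.
  by apply/eqP; rewrite eq_le lower powR_ge0.
by rewrite subr_eq0 => /eqP.
Qed.

End SignedPower.

Section LpSums.
Variable R : realType.
Implicit Types (s : R) (w : nat -> R).

Definition lp_sum s w : R := limn (series (fun n => `|w n| `^ s)).

Lemma lp_sum_ge0 s w : lp_summable s w -> 0 <= lp_sum s w.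
Proof.
move=> w_summable; apply: (limr_ge w_summable); near=> n.
by apply: sumr_ge0 => i _; apply: powR_ge0.
Unshelve. all: by end_near.
Qed.

Lemma lp_summableB s (u v : nat -> R) : 0 <= s ->
  lp_summable s u -> lp_summable s v -> lp_summable s (fun n => u n - v n).
Proof.
move=> s0 su sv; apply: (@series_le_cvg _ _ (fun n => 2 `^ s * (`|u n| `^ s + `|v n| `^ s))).
- by move=> n; apply: powR_ge0.
- by move=> n; rewrite mulr_ge0 ?addr_ge0 ?powR_ge0.
- move=> n; apply: le_trans (powR_add_le s0 (normr_ge0 _) (normr_ge0 _)).
  by rewrite ge0_ler_powR ?nnegrE ?addr_ge0 ?ler_normB.
- exact: (is_cvg_seriesZ (is_cvg_seriesD su sv)).
Qed.

Lemma lp_summable_signed_powR r q (u : nat -> R) :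
  lp_summable (r * q) u -> lp_summable q (fun n => signed_powR r (u n)).
Proof.
rewrite /lp_summable (_ : (fun n => _) = (fun n => `|u n| `^ (r * q))) //.
by apply/funext => n; rewrite normr_signed_powR powRrM.
Qed.

Lemma lim_series_le_lin (f g h : nat -> R) (m a b : R) :
  cvgn (series f) -> cvgn (series g) -> cvgn (series h) ->
  (forall n, m * f n <= a * g n + b * h n) ->
  m * limn (series f) <= a * limn (series g) + b * limn (series h).
Proof.
move=> cf cg ch fgh.
have cZf := is_cvg_seriesZ (k := m) cf; have cZg := is_cvg_seriesZ (k := a) cg.
have cZh := is_cvg_seriesZ (k := b) ch.
have := lim_series_le cZf (is_cvg_seriesD cZg cZh) fgh.
by rewrite lim_seriesD // !lim_seriesZ.
Qed.

End LpSums.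

Section SignedPowerLp.
Variables (R : realType) (r q : R).
Hypotheses (r1 : 1 < r) (q_gt0 : 0 < q).
Implicit Types (u v : R) (x y : nat -> R).

Let r_gt0 : 0 < r. Proof. exact: lt_trans r1. Qed.
Let p_ge0 : 0 <= r * q. Proof. by rewrite mulr_ge0 ?ltW. Qed.

Local Notation g := (signed_powR r).

Lemma signed_powR_dist_powR_ge u v :
  `|u - v| `^ (r * q) <= 2 `^ (r * q) * `|g u - g v| `^ q.
Proof.
have [lower _] := signed_powR_dist_bounds u v r1.
rewrite !powRrM -powRM ?powR_ge0 // ge0_ler_powR ?nnegrE ?powR_ge0 ?mulr_ge0 ?powR_ge0 //.
exact: ltW.
Qed.

Lemma signed_powR_dist_scaled_le u v e : 0 < e ->
  e `^ (r - 1) * `|g u - g v| `^ q <=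
  r `^ q * (`|u - v| `^ (r * q) +
            e `^ r * 2 `^ (r * q) * (`|u| `^ (r * q) + `|v| `^ (r * q))).
Proof.
move=> e0; have [_ upper] := signed_powR_dist_bounds u v r1.
set a := `|u - v|; set c := `|u| + `|v|.
have powq_r b : (b `^ q) `^ r = b `^ (r * q) by rewrite -powRrM mulrC.
have upper_q : `|g u - g v| `^ q <= r `^ q * (a `^ q * (c `^ q) `^ (r - 1)).
  apply: le_trans (ge0_ler_powR (ltW q_gt0) _ _ upper) _;
    rewrite ?nnegrE ?mulr_ge0 ?powR_ge0 ?(ltW r_gt0) //.
  by rewrite !powRM ?mulr_ge0 ?powR_ge0 ?(ltW r_gt0) // powRAC mulrA.
apply: le_trans (ler_wpM2l (powR_ge0 _ _) upper_q) _.
rewrite mulrCA ler_wpM2l ?powR_ge0 // mulrCA -powRM ?powR_ge0 ?(ltW e0) //.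
(* Absorb [e^(r-1)] into the second factor, then apply Young's inequality. *)
apply: le_trans (mul_powR_le_add r1 (powR_ge0 _ _) (mulr_ge0 (ltW e0) (powR_ge0 _ _))) _.
rewrite powq_r lerD2l powRM ?(ltW e0) ?powR_ge0 // powq_r -mulrA ler_wpM2l ?powR_ge0 //.
exact: powR_add_le p_ge0 (normr_ge0 u) (normr_ge0 v).
Qed.

Section Sums.
Variables x y : nat -> R.
Hypotheses (x_summable : lp_summable (r * q) x) (y_summable : lp_summable (r * q) y).

Let xy_summable : lp_summable (r * q) (fun n => x n - y n).
Proof. exact: lp_summableB. Qed.

Let gxy_summable : lp_summable q (fun n => g (x n) - g (y n)).
Proof. by apply: lp_summableB (ltW q_gt0) _ _; apply: lp_summable_signed_powR. Qed.

Lemma lp_sum_signed_powR_ge :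
  lp_sum (r * q) (fun n => x n - y n) <=
  2 `^ (r * q) * lp_sum q (fun n => g (x n) - g (y n)).
Proof.
have := lim_series_le xy_summable (is_cvg_seriesZ (k := 2 `^ (r * q)) gxy_summable).
by rewrite lim_seriesZ //; apply => n; apply: signed_powR_dist_powR_ge.
Qed.

Lemma lp_sum_signed_powR_scaled_le e : 0 < e ->
  e `^ (r - 1) * lp_sum q (fun n => g (x n) - g (y n)) <=
  r `^ q * (lp_sum (r * q) (fun n => x n - y n) +
            e `^ r * 2 `^ (r * q) * (lp_sum (r * q) x + lp_sum (r * q) y)).
Proof.
move=> e0; have norms_summable := is_cvg_seriesD x_summable y_summable.
rewrite /lp_sum -(lim_seriesD x_summable y_summable) mulrDr mulrA.
apply: lim_series_le_lin => // n; rewrite -mulrA -mulrDr.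
exact: signed_powR_dist_scaled_le.
Qed.

Lemma lp_norm_signed_powR_ge :
  lp_norm (r * q) (fun n => x n - y n) `^ r <=
  2 `^ r * lp_norm q (fun n => g (x n) - g (y n)).
Proof.
rewrite /lp_norm -/(lp_sum _ _) -/(lp_sum q _) -powRrM.
rewrite (_ : (r * q)^-1 * r = q^-1); last by rewrite invfM mulrAC mulVf ?gt_eqF // mul1r.
have -> : 2 `^ r = (2 `^ (r * q)) `^ q^-1 by rewrite -powRrM mulfK ?gt_eqF.
rewrite -powRM ?powR_ge0 ?lp_sum_ge0 // ge0_ler_powR ?nnegrE ?mulr_ge0 ?powR_ge0
  ?lp_sum_ge0 ?invr_ge0 ?(ltW q_gt0) //.
exact: lp_sum_signed_powR_ge.
Qed.

Lemma lp_sum_signed_powR_le rho : 1 <= q -> 0 < rho ->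
  lp_sum (r * q) x <= rho `^ (r * q) -> lp_sum (r * q) y <= rho `^ (r * q) ->
  lp_sum q (fun n => g (x n) - g (y n)) <=
  2 * r `^ q * lp_sum (r * q) (fun n => x n - y n) `^ r^-1 * ((4 * rho) `^ q) `^ (r - 1).
Proof.
move=> q1 rho0 hx hy.
apply: le_of_forall_scaled_young;
  rewrite ?powR_ge0 ?lp_sum_ge0 ?powR_gt0 ?mulr_gt0 //.
move=> e e0; apply: (le_trans (lp_sum_signed_powR_scaled_le e0)).
rewrite powRVK ?gt_eqF ?lp_sum_ge0 // ler_wpM2l ?powR_ge0 // lerD2l.
rewrite powRM ?(ltW e0) ?powR_ge0 // -mulrA ler_wpM2l ?powR_ge0 //.
have two_le : 2 <= 2 `^ (r * q) :> R.
  by apply: le1r_powR; [rewrite ler1n | exact: mulr_ege1 (ltW r1) q1].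
rewrite -powRrM (mulrC q r) (_ : 4 * rho = 2 * (2 * rho)); last by ring.
rewrite !powRM ?mulr_ge0 ?(ltW rho0) // ler_wpM2l ?powR_ge0 //.
apply: le_trans (lerD hx hy) _.
by apply: le_trans _ (ler_wpM2r (powR_ge0 _ _) two_le); rewrite mulr_natl mulr2n.
Qed.

Lemma lp_norm_signed_powR_le rho : 1 <= q -> 0 < rho ->
  lp_norm (r * q) x <= rho -> lp_norm (r * q) y <= rho ->
  lp_norm q (fun n => g (x n) - g (y n)) <=
  2 * r * (4 * rho) `^ (r - 1) * lp_norm (r * q) (fun n => x n - y n).
Proof.
move=> q1 rho0 hx hy; have p_neq0 : r * q != 0 by rewrite mulf_neq0 ?gt_eqF.
have sum_le w : lp_summable (r * q) w -> lp_norm (r * q) w <= rho ->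
    lp_sum (r * q) w <= rho `^ (r * q).
  move=> w_summable hw; rewrite -(powRVK p_neq0 (lp_sum_ge0 w_summable)).
  by rewrite ge0_ler_powR ?nnegrE ?powR_ge0 ?(ltW rho0).
have key := lp_sum_signed_powR_le q1 rho0 (sum_le _ x_summable hx) (sum_le _ y_summable hy).
change (lp_sum q (fun n => g (x n) - g (y n)) `^ q^-1 <=
  2 * r * (4 * rho) `^ (r - 1) * lp_sum (r * q) (fun n => x n - y n) `^ (r * q)^-1).
set A := lp_sum (r * q) (fun n => x n - y n) in key *.
have : 0 <= 4 * rho by rewrite mulr_ge0 ?ltW.
move: (4 * rho) key => B key B0.
apply: le_trans (ge0_ler_powR _ _ _ key) _;
  rewrite ?nnegrE ?invr_ge0 ?(ltW q_gt0) ?lp_sum_ge0 ?mulr_ge0 ?powR_ge0 //.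
have q_neq0 : q != 0 by rewrite gt_eqF.
rewrite !powRM ?mulr_ge0 ?powR_ge0 // (powRK q_neq0 (ltW r_gt0)) (powRAC B).
rewrite (powRK q_neq0 (powR_ge0 _ _)) -powRrM -invfM (mulrAC _ (A `^ _)).
by rewrite !ler_wpM2r ?powR_ge0 ?(ltW r_gt0) // ler1_powR ?ler1n ?invf_le1.
Qed.

End Sums.

End SignedPowerLp.

Section TranslatedMazurMap.
Variables (R : realType) (r q : R).
Hypotheses (r1 : 1 < r) (q1 : 1 <= q).

Let q_gt0 : 0 < q. Proof. exact: lt_le_trans ltr01 q1. Qed.
Let p_ge0 : 0 <= r * q. Proof. by rewrite mulr_ge0 ?ltW // (lt_trans ltr01). Qed.

Let translate_summable (a x : lp (r * q)) :
  lp_summable (r * q) (fun n => sval x n - sval a n).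
Proof. exact: lp_summableB p_ge0 (svalP x) (svalP a). Qed.

Definition mazur_map (a x : lp (r * q)) : lp q :=
  exist _ (fun n => signed_powR r (sval x n - sval a n))
    (lp_summable_signed_powR (@translate_summable a x)).

Let translate_sub (a x y : lp (r * q)) :
  (fun n => (sval x n - sval a n) - (sval y n - sval a n)) = (fun n => sval x n - sval y n).
Proof. by apply/funext => n; rewrite opprB addrA subrK. Qed.

Lemma mazur_map_inj a : injective (mazur_map a).
Proof.
move=> x y /(congr1 sval) mazur_xy.
apply: eq_sig_hprop => [? ? ?|]; first exact: Prop_irrelevance.
apply/funext => n; have /signed_powR_inj := congr1 (fun f => f n) mazur_xy.
by move=> /(_ r1) /addIr.
Qed.

Lemma lp_dist_mazur_map_ge a x y :
  lp_dist x y `^ r <= 2 `^ r * lp_dist (mazur_map a x) (mazur_map a y).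
Proof.
have := lp_norm_signed_powR_ge r1 q_gt0 (@translate_summable a x) (@translate_summable a y).
by rewrite /lp_dist /mazur_map /= -(translate_sub a).
Qed.

Lemma lp_dist_mazur_map_le a x y rho : 0 < rho ->
  lp_dist x a <= rho -> lp_dist y a <= rho ->
  lp_dist (mazur_map a x) (mazur_map a y) <= 2 * r * (4 * rho) `^ (r - 1) * lp_dist x y.
Proof.
move=> rho0 xa ya.
have := lp_norm_signed_powR_le r1 q_gt0 (@translate_summable a x) (@translate_summable a y)
  q1 rho0 xa ya.
by rewrite /lp_dist /mazur_map /= -(translate_sub a).
Qed.

End TranslatedMazurMap.

Section LipNorm.
Variables (R : realType) (M N : Type) (dM : M -> M -> R) (dN : N -> N -> R).
Variables (C : set M) (f : M -> N).
Hypothesis C_nontrivial : exists a b, C a /\ C b /\ a <> b.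
Hypothesis dM_ge0 : forall x y, C x -> C y -> 0 <= dM x y.

(* Pairs at distance 0 contribute the junk quotient [_ / 0 = 0] to the
   supremum, hence the hypothesis [0 <= L]. *)
Lemma lip_norm_le L : 0 <= L ->
  (forall x y, C x -> C y -> dN (f x) (f y) <= L * dM x y) -> lip_norm dM dN C f <= L.
Proof.
move=> L0 lipf; have [a [b [Ca [Cb ab]]]] := C_nontrivial; apply: ge_sup.
  by exists (dN (f a) (f b) / dM a b), a, b.
move=> _ [x [y [Cx Cy _ ->]]].
have [->|dxy_neq0] := eqVneq (dM x y) 0; first by rewrite invr0 mulr0.
by rewrite ler_pdivrMr ?lt0r ?dxy_neq0 ?dM_ge0 ?lipf.
Qed.

Lemma lip_norm_separation L D m r Delta :
  0 <= L -> 0 < D -> 0 < m -> 0 < r -> 0 <= Delta ->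
  (forall x y, C x -> C y -> dN (f x) (f y) <= L * dM x y) ->
  (forall x y, C x -> C y -> dM x y `^ r <= m * dN (f x) (f y)) ->
  L / D * Delta <= Delta `^ r / m ->
  forall x y, C x -> C y -> dM x y > Delta ->
    dN (f x) (f y) > lip_norm dM dN C f / D * Delta.
Proof.
move=> L0 D0 m0 r0 Delta0 lipf colipf LDm x y Cx Cy Delta_xy.
apply: le_lt_trans (_ : _ <= Delta `^ r / m) _.
  apply: le_trans LDm; rewrite ler_wpM2r // ler_wpM2r ?invr_ge0 ?(ltW D0) //.
  exact: lip_norm_le.
rewrite ltr_pdivrMr // mulrC; apply: lt_le_trans (colipf x y Cx Cy).
by rewrite gt0_ltr_powR ?nnegrE // (le_trans Delta0 (ltW Delta_xy)).
Qed.

End LipNorm.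

Definition mazur_distortion (R : realType) (r : R) : R := 2 * r * 4 `^ (r - 1) * 2 `^ r.

Lemma mazur_distortion_gt1 (R : realType) (r : R) : 1 < r -> 1 < mazur_distortion r.
Proof.
move=> r1; have r0 : 0 < r := lt_trans ltr01 r1.
have h4 : 1 <= 4 `^ (r - 1) by rewrite powR_ge1 ?ler1n // subr_ge0 ltW.
have h2 : 1 <= 2 `^ r :> R by rewrite powR_ge1 ?ler1n // ltW.
apply: (@lt_le_trans _ _ (2 * r)); first lra.
by rewrite /mazur_distortion -mulrA ler_peMr ?mulr_ege1 // mulr_ge0 // ltW.
Qed.

(* [2 r (4 K Delta)^(r-1)] is the Lipschitz bound of the Mazur map on a set of
   radius [K Delta]; the distortion is chosen so that this bound, rescaled by
   [Delta / D], meets the co-Lipschitz threshold [Delta^r / 2^r]. *)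
Lemma mazur_distortion_ratio (R : realType) (r K Delta : R) : 1 < r -> 0 < K -> 0 < Delta ->
  2 * r * (4 * (K * Delta)) `^ (r - 1) / (mazur_distortion r * K `^ (r - 1)) * Delta =
  Delta `^ r / 2 `^ r.
Proof.
move=> r1 K0 Delta0; have r0 : 0 < r := lt_trans ltr01 r1.
rewrite /mazur_distortion (powRM _ (ler0n _ 4) (ltW (mulr_gt0 K0 Delta0))).
rewrite (powRM _ (ltW K0) (ltW Delta0)) -(mulr_powRB1 (ltW Delta0) r0); field.
by rewrite !gt_eqF ?powR_gt0 ?mulr_gt0.
Qed.

Theorem lemma18 (R : realType) :
  forall r : R, 1 < r ->
  exists c : R, 0 < c /\
    forall (K p q : R), 1 < K -> 1 <= q -> p = r * q ->
      exists D : R, 1 < D /\ D <= c * K `^ (r - 1) /\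
        localized_weakly_biLipschitz (@lp_dist R p) (@lp_dist R q) K D.
Proof.
move=> r r1; have r0 : 0 < r := lt_trans ltr01 r1.
have c_gt1 := mazur_distortion_gt1 r1; have c0 := lt_trans ltr01 c_gt1.
exists (mazur_distortion r); split => // K p q K1 q1 ->.
have K0 := lt_trans ltr01 K1.
have Kr1 : 1 <= K `^ (r - 1) by rewrite powR_ge1 ?subr_ge0 ?ltW.
have D_gt1 : 1 < mazur_distortion r * K `^ (r - 1).
  by apply: lt_le_trans c_gt1 _; rewrite ler_peMr // ltW.
exists (mazur_distortion r * K `^ (r - 1)); split => //; split => //.
move=> Delta C Delta0 Cab diamC; have [a [b [Ca [Cb ab]]]] := Cab.
have KDelta0 : 0 < K * Delta by rewrite mulr_gt0.
set L := 2 * r * (4 * (K * Delta)) `^ (r - 1).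
have L0 : 0 <= L by rewrite mulr_ge0 ?powR_ge0 // mulr_ge0 // ltW.
have lipF x y : C x -> C y ->
    lp_dist (mazur_map r1 q1 a x) (mazur_map r1 q1 a y) <= L * lp_dist x y.
  by move=> Cx Cy; apply: lp_dist_mazur_map_le; rewrite ?diamC.
exists (mazur_map r1 q1 a); split; first by exists L.
split; first by exists a, b; do 2!split => //; move/mazur_map_inj.
have D0 := lt_trans ltr01 D_gt1; have two_r0 : 0 < 2 `^ r :> R by rewrite powR_gt0.
have := lip_norm_separation (dM := @lp_dist R (r * q)) Cab (fun x y _ _ => powR_ge0 _ _)
  L0 D0 two_r0 r0 (ltW Delta0) lipF (fun x y _ _ => lp_dist_mazur_map_ge r1 q1 a x y).
by apply; rewrite mazur_distortion_ratio.
Qed.
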